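(* For every odd positive integer $k$, there is a matroid in $\mathcal{D}$ that has a minor isomorphic to the binary projective geometry $PG(k-1,2)$. In particular, members of $\mathcal{D}$ can have arbitrarily large binary projective geometries as minors.
   Context: Relaxing a circuit-hyperplane $H$ of $M$ means forming the matroid on $E(M)$ whose bases are the bases of $M$ together with $H$. $\mathcal{D}$ is the collection of all matroids obtained from a connected binary matroid $M$ having two disjoint circuit-hyperplanes $X,Y$ with $X\cup Y=E(M)$ by relaxing both $X$ and $Y$ (the matroid on $E(M)$ whose bases are the bases of $M$ together with $X$ and $Y$). $PG(k-1,2)$ is the rank-$k$ binary projective geometry, i.e. the vector matroid of all $2^k-1$ nonzero vectors of $\mathrm{GF}(2)^k$. *)

From HB Require Import structures.
From mathcomp Require Import all_boot all_order all_algebra.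
Set Implicit Arguments. Unset Strict Implicit. Unset Printing Implicit Defensive.
Import GRing.Theory.

Record matroid (T : finType) := Matroid {
  ground : {set T};
  bases  : {set {set T}} }.

Definition is_matroid (T : finType) (M : matroid T) : Prop :=
  [/\ bases M != set0,
      (forall B, B \in bases M -> B \subset ground M) &
      (forall B1 B2, B1 \in bases M -> B2 \in bases M ->
         forall x, x \in B1 :\: B2 ->
         exists2 y, y \in B2 :\: B1 & (y |: (B1 :\ x)) \in bases M)].

Section MatroidNotions.
Variables (T : finType) (M : matroid T).

Definition mindep (X : {set T}) : bool :=
  [exists B in bases M, X \subset B].

Definition mrank (X : {set T}) : nat := \max_(B in bases M) #|B :&: X|.

Definition mcircuit (C : {set T}) : bool :=
  [&& C \subset ground M, ~~ mindep C &
      [forall Y : {set T}, (Y \proper C) ==> mindep Y]].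

Definition mclosure (X : {set T}) : {set T} :=
  [set x in ground M | mrank (x |: X) == mrank X].

Definition mflat (X : {set T}) : bool :=
  (X \subset ground M) && (mclosure X == X).

Definition mhyperplane (H : {set T}) : bool :=
  mflat H && ((mrank H).+1 == mrank (ground M)).

Definition circuit_hyperplane (H : {set T}) : bool :=
  mcircuit H && mhyperplane H.

Definition mconnected : Prop :=
  forall x y, x \in ground M -> y \in ground M -> x != y ->
    exists C, mcircuit C /\ x \in C /\ y \in C.

End MatroidNotions.

Section VectorMatroid.
Variables (T : finType) (n : nat) (f : T -> 'rV['F_2]_n).

(* X is independent iff the vectors f x (x in X) are distinct and linearly
   independent, i.e. the matrix with these rows has rank #|X| *)
Definition vindep (X : {set T}) : bool :=
  \rank (\matrix_(i < #|T|) (if enum_val i \in X then f (enum_val i) else 0%R))%R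
    == #|X|.

Definition vbasis (E B : {set T}) : bool :=
  [&& B \subset E, vindep B &
      [forall x in E :\: B, ~~ vindep (x |: B)]].

Definition vector_matroid (E : {set T}) : matroid T :=
  Matroid E [set B | vbasis E B].
End VectorMatroid.

Definition binary (T : finType) (M : matroid T) : Prop :=
  exists n (f : T -> 'rV['F_2]_n),
    forall B : {set T}, (B \in bases M) = vbasis f (ground M) B.

Definition relax2 (T : finType) (M : matroid T) (X Y : {set T}) : matroid T :=
  Matroid (ground M) (X |: (Y |: bases M)).

Definition in_D (T : finType) (N : matroid T) : Prop :=
  exists (M : matroid T) (X Y : {set T}),
    [/\ is_matroid M, binary M & mconnected M] /\
    [/\ circuit_hyperplane M X, circuit_hyperplane M Y,
        [disjoint X & Y], X :|: Y = ground M &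
        N = relax2 M X Y].

(* minor M / C \ D, with C, D disjoint subsets of E(M); its rank function is
   r(X) = r_M(X ∪ C) - r_M(C), its bases are the B ⊆ E - (C ∪ D) with
   r(B) = |B| = r(E - D) - r_M(C). *)
Definition minor_of (T : finType) (M : matroid T) (C D : {set T}) : matroid T :=
  Matroid (ground M :\: (C :|: D))
    [set B : {set T} | [&& B \subset ground M :\: (C :|: D),
                 mrank M (B :|: C) == #|B| + mrank M C &
                 #|B| + mrank M C == mrank M (ground M :\: D)]].

Definition miso (T1 T2 : finType) (M1 : matroid T1) (M2 : matroid T2) : Prop :=
  exists phi : T1 -> T2,
    [/\ {in ground M1 &, injective phi}, phi @: ground M1 = ground M2 &
        forall B : {set T1}, B \subset ground M1 ->
          (B \in bases M1) = (phi @: B \in bases M2)].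

Definition has_minor_iso (T1 T2 : finType) (M : matroid T1) (N : matroid T2) : Prop :=
  exists C D : {set T1},
    [/\ C \subset ground M, D \subset ground M, [disjoint C & D] &
        miso (minor_of M C D) N].

Definition PG2 (k : nat) : matroid 'rV['F_2]_k :=
  vector_matroid (fun v : 'rV['F_2]_k => v) [set v : 'rV['F_2]_k | v != 0%R].

(* The witness is an explicit binary matroid M = M[rep] in GF(2)^Coord, where
   Coord = {oo} + XIdx and XIdx = J + W + {p, q} with J = {1..k} and
   W = GF(2)^k.  Writing w also for sum_j w_j e_j, the ground set is X + Y:
   - X = {e_a | a in XIdx} + {x* = sum_a e_a}, a circuit spanning the
     hyperplane v_oo = 0;
   - Y = {y0 = e_oo, yq = e_oo + e_p + e_q, y_w = e_oo + w + e_w + (1+|w|) e_p,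
     y_j = e_oo + e_j + e_p} + {y* = the sum of these}, a circuit spanning the
     hyperplane sum_(a in XIdx) v_a = 0.
   For odd k the index sets of X and Y have odd size, which puts x* and y* on
   the correct side of these hyperplanes; so X and Y are disjoint
   circuit-hyperplanes covering E(M), and circuits built from supports show
   that M is connected.  Contracting the set C of unit vectors of all
   coordinates outside J amounts to projecting onto GF(2)^J, which sends y_w
   to w; deleting everything but the y_w with w <> 0 therefore leaves
   PG(k-1,2).  Relaxing X and Y changes no rank of a set containing C: such a
   set contains e_oo and e_p, and swapping x* for e_oo (resp. y* for e_p)
   turns its intersection with X (resp. Y) into an independent subset. *)

From Pilot Require Import Defs.
From mathcomp Require Import all_boot all_order all_algebra.
Set Implicit Arguments. Unset Strict Implicit. Unset Printing Implicit Defensive.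
Import GRing.Theory.
Local Open Scope ring_scope.

Lemma F2_cases (x : 'F_2) : x = 0 \/ x = 1.
Proof. by case: x => [[|[|]]] //= lt; [left | right]; apply/val_inj. Qed.

Lemma F2_neq1 (x : 'F_2) : x != 1 -> x = 0.
Proof. by case: (F2_cases x) => -> //; rewrite eqxx. Qed.

Lemma F2_addxx (x : 'F_2) : x + x = 0.
Proof. by case: (F2_cases x) => ->; [rewrite addr0 | apply/val_inj]. Qed.

Lemma F2_add_neq (a b : 'F_2) : a = b + (a != b)%:R.
Proof. by case: (F2_cases a) => ->; case: (F2_cases b) => ->; apply/val_inj. Qed.

Lemma F2_nat (m : nat) : (m%:R : 'F_2) = (odd m)%:R.
Proof.
elim: m => [//|m IH]; rewrite -natr1 IH /=.
by case: (odd m) => /=; [rewrite F2_addxx | rewrite add0r].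
Qed.

Lemma F2_sum_const1 (I : finType) : \sum_(i : I) (1 : 'F_2) = (odd #|I|)%:R.
Proof. by rewrite sumr_const -F2_nat. Qed.

Lemma mx_addxx m n (A : 'M['F_2]_(m, n)) : A + A = 0.
Proof. by apply/matrixP => i j; rewrite !mxE F2_addxx. Qed.

Lemma mx_add_eq0 m n (A B : 'M['F_2]_(m, n)) : A + B = 0 -> A = B.
Proof. by move=> AB0; rewrite -[A]addr0 -(mx_addxx B) addrA AB0 add0r. Qed.

Lemma sum_delta (I : finType) (P : pred I) (b : I) :
  \sum_(a | P a) ((b == a)%:R : 'F_2) = (P b)%:R.
Proof.
case Pb: (P b); last by rewrite big1 // => a Pa; case: eqP => // ba; rewrite ba Pa in Pb.
rewrite (bigD1 b) //= eqxx big1 ?addr0 // => a /andP[_ ab].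
by rewrite eq_sym (negbTE ab).
Qed.

Lemma finset_ind (T : finType) (P : {set T} -> Prop) :
  P set0 -> (forall (x : T) (Z : {set T}), x \notin Z -> P Z -> P (x |: Z)) ->
  forall Z, P Z.
Proof.
move=> P0 PU Z; move: {2}#|Z| (erefl #|Z|) => m; elim: m Z => [|m IH] Z cardZ.
  by move/eqP: cardZ; rewrite cards_eq0 => /eqP ->.
have /card_gt0P[x xZ] : (0 < #|Z|)%N by rewrite cardZ.
rewrite -(setD1K xZ); apply: PU; first by rewrite !inE eqxx.
by apply: IH; move: cardZ; rewrite (cardsD1 x Z) xZ add1n => -[].
Qed.

Section BinaryVectorMatroid.
Variables (T : finType) (n : nat) (f : T -> 'rV['F_2]_n).
Implicit Types (Z S B E H I : {set T}).

Definition mat Z : 'M_(#|T|, n) :=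
  \matrix_(i < #|T|) (if enum_val i \in Z then f (enum_val i) else 0).
Definition rk Z := \rank (mat Z).

Lemma mat_subP Z m (V : 'M_(m, n)) :
  reflect (forall z, z \in Z -> (f z <= V)%MS) (mat Z <= V)%MS.
Proof.
apply: (iffP row_subP) => sub.
  by move=> z zZ; have := sub (enum_rank z); rewrite rowK enum_rankK zZ.
by move=> i; rewrite rowK; case: ifP => iZ; [exact: sub | exact: sub0mx].
Qed.

Lemma f_sub_mat z Z : z \in Z -> (f z <= mat Z)%MS.
Proof.
by move=> zZ; have := row_sub (enum_rank z) (mat Z); rewrite rowK enum_rankK zZ.
Qed.

Lemma matS Z Z' : Z \subset Z' -> (mat Z <= mat Z')%MS.
Proof. by move=> sZ; apply/mat_subP => z zZ; apply/f_sub_mat/(subsetP sZ). Qed.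

Lemma rkS Z Z' : Z \subset Z' -> (rk Z <= rk Z')%N.
Proof. by move=> sZ; apply/mxrankS/matS. Qed.

Lemma rk0 : rk set0 = 0%N.
Proof. by apply/eqP; rewrite mxrank_eq0; apply/eqP/matrixP => i j; rewrite !mxE inE !mxE. Qed.

Lemma spanP v Z :
  reflect (exists2 S : {set T}, S \subset Z & v = \sum_(s in S) f s) (v <= mat Z)%MS.
Proof.
apply: (iffP idP) => [|[S sSZ ->]]; last first.
  by apply: summx_sub => s sS; apply/f_sub_mat/(subsetP sSZ).
case/submxP => w ->; rewrite mulmx_sum_row.
exists [set t in Z | w 0 (enum_rank t) == 1].
  by apply/subsetP => t; rewrite inE => /andP[].
rewrite (reindex enum_rank); last exact/onW_bij/enum_rank_bij.
rewrite [RHS]big_mkcond /=; apply: eq_bigr => t _.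
rewrite rowK enum_rankK inE; case: (t \in Z) => /=; last by rewrite scaler0.
by case: (F2_cases (w 0 (enum_rank t))) => ->; rewrite ?scale0r ?scale1r.
Qed.

Lemma rkU1 x Z : rk (x |: Z) = (rk Z + ~~ (f x <= mat Z)%MS)%N.
Proof.
have sZ : (mat Z <= mat (x |: Z))%MS by apply/matS/subsetUr.
have sxZ : (mat (x |: Z) <= mat Z + f x)%MS.
  apply/mat_subP => z; rewrite !inE => /orP[/eqP ->|zZ]; first exact: addsmxSr.
  exact/(submx_trans (f_sub_mat zZ))/addsmxSl.
have [fxZ|fxZ] /= := boolP (f x <= mat Z)%MS.
  rewrite addn0; apply/eqP; rewrite eqn_leq (mxrankS sZ) andbT.
  by apply/mxrankS/(submx_trans sxZ); rewrite addsmx_sub submx_refl.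
have ltZ : (mat Z < mat (x |: Z))%MS.
  by rewrite ltmxE sZ; apply: contra fxZ; apply: submx_trans (f_sub_mat (setU11 x Z)).
apply/eqP; rewrite eqn_leq addn1 rank_ltmx // andbT.
apply: leq_trans (mxrankS sxZ) _; apply: leq_trans (mxrank_adds_leqif _ _).1 _.
by rewrite -[(rk Z).+1]addn1 leq_add2l rank_leq_row.
Qed.

Definition zero_sum_free Z :=
  forall S : {set T}, S \subset Z -> \sum_(s in S) f s = 0 -> S = set0.

Lemma rk_le_card Z : (rk Z <= #|Z|)%N.
Proof.
elim/finset_ind: Z => [|x Z xZ IH]; first by rewrite rk0 cards0.
by rewrite rkU1 cardsU1 xZ add1n; case: (~~ _); rewrite ?addn1 ?addn0 // ltnW.
Qed.

Lemma indepP Z : rk Z = #|Z| <-> zero_sum_free Z.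
Proof.
elim/finset_ind: Z => [|x Z xZ IH].
  by rewrite rk0 cards0; split=> // _ S; rewrite subset0 => /eqP.
rewrite rkU1 cardsU1 xZ add1n; split=> [rkxZ|zsf_xZ].
  have [rkZ fxZ] : rk Z = #|Z| /\ ~~ (f x <= mat Z)%MS.
    have := rk_le_card Z; move: rkxZ; case: (~~ _) => /=.
      by rewrite addn1 => -[->].
    by rewrite addn0 => ->; rewrite ltnn.
  move=> S sS S0; have [xS|xS] := boolP (x \in S).
    case/negP: fxZ; apply/spanP; exists (S :\ x).
      apply/subsetP => s; rewrite !inE => /andP[sx sS'].
      by move: (subsetP sS s sS'); rewrite !inE (negbTE sx).
    by apply: mx_add_eq0; rewrite -big_setD1.
  apply: (IH.1 rkZ) S0; apply/subsetP => s sS'; have := subsetP sS s sS'.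
  by rewrite !inE => /orP[/eqP xs|//]; move: xS; rewrite -xs sS'.
have zsfZ : zero_sum_free Z by move=> S sS; apply/zsf_xZ/(subset_trans sS)/subsetUr.
rewrite (IH.2 zsfZ); have [/spanP[S sS fxS]|] := boolP (f x <= mat Z)%MS; last by rewrite addn1.
have /setP/(_ x) : x |: S = set0.
  apply: zsf_xZ; first exact: setUS.
  by rewrite big_setU1 /= ?fxS ?mx_addxx //; apply: contra xZ; apply: (subsetP sS).
by rewrite !inE eqxx.
Qed.

Lemma indepS Z Z' : Z \subset Z' -> rk Z' = #|Z'| -> rk Z = #|Z|.
Proof. by move=> sZ /indepP zsf; apply/indepP => S sS; apply/zsf/(subset_trans sS). Qed.

Lemma indep_le_rk I Z : I \subset Z -> rk I = #|I| -> (#|I| <= rk Z)%N.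
Proof. by move=> sIZ <-; exact: rkS. Qed.

Lemma indep_by_pivots Z Z' :
  (forall z, z \in Z -> z \notin Z' -> exists2 i, f z 0 i = 1 &
     forall z', z' \in Z -> z' != z -> f z' 0 i = 0) ->
  rk Z' = #|Z'| -> rk Z = #|Z|.
Proof.
move=> pivot /indepP zsfZ'; apply/indepP => S sSZ S0.
apply: (zsfZ' _ _ S0); apply/subsetP => s sS; apply/negPn/negP => sZ'.
have [i fs1 fo0] := pivot s (subsetP sSZ s sS) sZ'.
have := congr1 (fun v : 'rV_n => v 0 i) S0; rewrite summxE (bigD1 s) //= fs1.
rewrite big1 ?addr0 ?mxE // => z /andP[zS zs].
by apply: fo0 => //; exact: (subsetP sSZ).
Qed.

Lemma rk_setD1_sum Z z : z \in Z -> f z = \sum_(s in Z :\ z) f s -> rk Z = rk (Z :\ z).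
Proof.
move=> zZ fz; rewrite -{1}(setD1K zZ) rkU1.
have -> : (f z <= mat (Z :\ z))%MS by apply/spanP; exists (Z :\ z).
by rewrite addn0.
Qed.

Lemma span_form (g : 'rV['F_2]_n -> 'F_2) Z v : {morph g : a b / a + b} ->
  (forall z, z \in Z -> g (f z) = 0) -> (v <= mat Z)%MS -> g v = 0.
Proof.
move=> gD gZ /spanP[S sS ->].
have g0 : g 0 = 0 by apply: (@addrI _ (g 0)); rewrite -gD !addr0.
apply: (big_ind (fun v => g v = 0)) => // [a b ga gb|s sS']; first by rewrite gD ga gb addr0.
by rewrite gZ ?(subsetP sS).
Qed.

Lemma vbasisE E B :
  Defs.vbasis f E B = [&& B \subset E, rk B == #|B| & (rk E <= rk B)%N].
Proof.
rewrite /Defs.vbasis /vindep -/(mat _) -/(rk _).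
case sBE: (B \subset E) => //=; case: (boolP (rk B == #|B|)) => //= /eqP iB.
apply/forallP/idP => [maxB|le x].
  apply: mxrankS; apply/mat_subP => z zE.
  have [zB|zB] := boolP (z \in B); first exact: f_sub_mat.
  have := maxB z; rewrite inE zB zE /= /vindep -/(mat _) -/(rk _) rkU1 cardsU1 zB iB /=.
  by case: (f z <= mat B)%MS => //=; rewrite addn1 add1n eqxx.
apply/implyP; rewrite inE => /andP[xB xE].
rewrite /vindep -/(mat _) -/(rk _) cardsU1 xB /=.
have : (rk (x |: B) <= rk E)%N by apply: rkS; rewrite subUset sub1set xE sBE.
move=> le'; apply/negP => /eqP eq; move: (leq_trans le' le).
by rewrite eq iB add1n ltnn.
Qed.

Lemma extend_to_basis E Z : Z \subset E -> rk Z = #|Z| ->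
  exists2 B, Defs.vbasis f E B & Z \subset B.
Proof.
move: {2}#|E :\: Z| (erefl #|E :\: Z|) => m; elim: m Z => [|m IH] Z cardEZ sZE iZ.
  exists Z => //; rewrite vbasisE sZE iZ eqxx /= -iZ; apply: rkS.
  by move/eqP: cardEZ; rewrite cards_eq0 setD_eq0.
case: (pickP [pred x | (x \in E :\: Z) && ~~ (f x <= mat Z)%MS]) => [x /andP[]|spanned].
  rewrite inE => /andP[xZ xE] fxZ.
  have [B bB sB] : exists2 B, Defs.vbasis f E B & x |: Z \subset B.
    apply: IH; last by rewrite rkU1 cardsU1 xZ fxZ iZ addn1 add1n.
      move: cardEZ; rewrite (cardsD1 x) inE xZ xE add1n => -[<-]; apply: eq_card => y.
      by rewrite !inE negb_or; case: (y == x); case: (y \in Z); case: (y \in E).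
    by rewrite subUset sub1set xE sZE.
  by exists B => //; apply: subset_trans sB; exact: subsetUr.
exists Z => //; rewrite vbasisE sZE iZ eqxx /= -iZ; apply: mxrankS; apply/mat_subP => z zE.
have [zZ|zZ] := boolP (z \in Z); first exact: f_sub_mat.
by have := spanned z; rewrite /= inE zZ zE => /negbFE.
Qed.

Lemma vbasis_rk E B : Defs.vbasis f E B -> rk B = #|B| /\ rk B = rk E.
Proof.
rewrite vbasisE => /and3P[sBE /eqP iB le]; split=> //.
by apply/eqP; rewrite eqn_leq le rkS.
Qed.

Lemma vector_matroidP E : is_matroid (vector_matroid f E).
Proof.
split=> [|B|B1 B2]; rewrite /= ?inE.
- have [B bB _] := extend_to_basis (sub0set E) (etrans rk0 (esym (cards0 T))).
  by apply/set0Pn; exists B; rewrite inE.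
- by rewrite vbasisE => /andP[].
move=> b1 b2 x; rewrite inE => /andP[xB2 xB1].
have [i1 r1] := vbasis_rk b1; have [i2 r2] := vbasis_rk b2.
have iB1x : rk (B1 :\ x) = #|B1 :\ x| by apply: (indepS _ i1); exact: subsetDl.
have cB1 : #|B1| = (#|B1 :\ x|).+1 by rewrite (cardsD1 x) xB1.
case: (pickP [pred y | (y \in B2) && ~~ (f y <= mat (B1 :\ x))%MS]) => [y /andP[yB2 fy]|spanned].
  have yB1x : y \notin B1 :\ x by apply: contra fy; exact: f_sub_mat.
  have yB1 : y \notin B1 by move: yB1x; rewrite !inE (contraNneq _ xB2) // => <-.
  exists y; first by rewrite inE yB2 yB1.
  rewrite inE vbasisE rkU1 cardsU1 yB1x fy iB1x addn1 add1n -cB1 -i1 r1 !leqnn !eqxx andbT.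
  move: b1 b2; rewrite !vbasisE => /andP[sB1 _] /andP[sB2 _].
  by rewrite subUset sub1set (subsetP sB2) // (subset_trans (subsetDl _ _) sB1).
have : (rk B2 <= rk (B1 :\ x))%N.
  by apply/mxrankS/mat_subP => z zB2; have := spanned z; rewrite /= zB2 => /negbFE.
by rewrite r2 -r1 iB1x i1 cB1 ltnn.
Qed.

Lemma mrank_vm E Z : Z \subset E -> mrank (vector_matroid f E) Z = rk Z.
Proof.
move=> sZE; apply/eqP; rewrite eqn_leq; apply/andP; split.
  apply/bigmax_leqP => B; rewrite inE => /vbasis_rk[iB _].
  by rewrite -(indepS (subsetIl B Z) iB) rkS // subsetIr.
have [I bI _] := extend_to_basis (sub0set Z) (etrans rk0 (esym (cards0 T))).
have [iI rI] := vbasis_rk bI.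
have sIZ : I \subset Z by move: bI; rewrite vbasisE => /andP[].
have [B bB sIB] := extend_to_basis (subset_trans sIZ sZE) iI.
rewrite -rI iI; apply: leq_trans (leq_bigmax_cond _ _); last by rewrite /= inE; exact: bB.
by apply: subset_leq_card; rewrite subsetI sIB sIZ.
Qed.

Lemma mindep_vm E Z : Z \subset E -> mindep (vector_matroid f E) Z = (rk Z == #|Z|).
Proof.
move=> sZE; apply/existsP/eqP => [[B /andP[]]|iZ].
  by rewrite inE => /vbasis_rk[iB _] sZB; exact: indepS sZB iB.
by have [B bB sZB] := extend_to_basis sZE iZ; exists B; rewrite inE bB.
Qed.

Lemma mcircuit_vm E Z z0 : Z \subset E -> z0 \in Z ->
  f z0 = \sum_(s in Z :\ z0) f s -> rk (Z :\ z0) = #|Z :\ z0| ->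
  mcircuit (vector_matroid f E) Z.
Proof.
move=> sZE z0Z fz0 iZ0; have zsfZ0 := (indepP _).1 iZ0.
apply/and3P; split => //.
  rewrite mindep_vm //; apply/negP => /eqP /indepP zsfZ.
  have /setP/(_ z0) : Z = set0 by apply: zsfZ => //; rewrite (big_setD1 z0) //= -fz0 mx_addxx.
  by rewrite z0Z inE.
apply/forallP => Y; apply/implyP; rewrite properE => /andP[sYZ nsZY].
rewrite mindep_vm; last exact: subset_trans sYZ sZE.
apply/eqP/indepP => S sSY S0; have sSZ := subset_trans sSY sYZ.
have [z0S|z0S] := boolP (z0 \in S); last first.
  apply: zsfZ0 S0; apply/subsetP => s sS; rewrite !inE (subsetP sSZ) // andbT.
  by apply: contraNneq z0S => <-.
case/negP: nsZY; apply/subsetP => z zZ; apply: (subsetP sSY).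
have sumS : \sum_(s in S :\ z0) f s = f z0 by apply/esym/mx_add_eq0; rewrite -big_setD1.
have sS0 : S :\ z0 \subset Z :\ z0 by exact: setSD.
have : (Z :\ z0) :\: (S :\ z0) = set0.
  apply: zsfZ0; first exact: subsetDl.
  apply: (addrI (f z0)); rewrite addr0 {1}fz0 (big_setID (S :\ z0)) /= (setIidPr sS0) sumS.
  by rewrite -addrA mx_addxx addr0.
move/setP/(_ z); rewrite !inE zZ andbT; case: eqP => [-> // | _] /=.
by rewrite andbT => /negbFE.
Qed.

Lemma mclosure_vm E H : H \subset E ->
  mclosure (vector_matroid f E) H = [set x in E | (f x <= mat H)%MS].
Proof.
move=> sHE; apply/setP => x; rewrite !inE /=; case xE: (x \in E) => //=.
rewrite !mrank_vm ?subUset ?sub1set ?xE // rkU1.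
by case: (f x <= mat H)%MS; rewrite ?addn0 ?addn1 ?eqxx ?(gtn_eqF (ltnSn _)).
Qed.

Lemma mhyperplane_vm E H (g : 'rV['F_2]_n -> 'F_2) :
  {morph g : a b / a + b} -> H \subset E ->
  (forall t, t \in E -> (g (f t) == 0) = (t \in H)) -> (rk H).+1 = rk E ->
  mhyperplane (vector_matroid f E) H.
Proof.
move=> gD sHE gH rkH; apply/andP; split; last by rewrite !mrank_vm // rkH.
rewrite /mflat sHE mclosure_vm //=; apply/eqP/setP => t; rewrite inE.
apply/andP/idP => [[tE ftH]|tH]; last by rewrite (subsetP sHE) // f_sub_mat.
rewrite -gH //; apply/eqP/(span_form gD _ ftH) => z zH.
by apply/eqP; rewrite gH ?(subsetP sHE).
Qed.

End BinaryVectorMatroid.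

Lemma rk_relabel (T T' : finType) n (f : T -> 'rV['F_2]_n) (g : T' -> 'rV['F_2]_n)
    (phi : T -> T') (Z : {set T}) :
  {in Z, forall z, f z = g (phi z)} -> rk f Z = rk g (phi @: Z).
Proof.
move=> fg; apply/eqmx_rank/andP; split; apply/mat_subP.
  by move=> z zZ; rewrite fg // f_sub_mat // imset_f.
by move=> _ /imsetP[z zZ ->]; rewrite -fg // f_sub_mat.
Qed.

Lemma mat_setU (T : finType) n (f : T -> 'rV['F_2]_n) (Z Z' : {set T}) :
  (mat f (Z :|: Z') :=: mat f Z + mat f Z')%MS.
Proof.
apply/eqmxP/andP; split; last by rewrite addsmx_sub !matS ?subsetUl ?subsetUr.
apply/mat_subP => z; rewrite inE => /orP[] zZ.
  exact/(submx_trans (f_sub_mat f zZ))/addsmxSl.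
exact/(submx_trans (f_sub_mat f zZ))/addsmxSr.
Qed.

Lemma mat_mulmx (T : finType) n p (f : T -> 'rV['F_2]_n) (P : 'M_(n, p)) (Z : {set T}) :
  mat (fun t => f t *m P) Z = mat f Z *m P.
Proof. by apply/row_matrixP => i; rewrite row_mul !rowK; case: ifP; rewrite ?mul0mx. Qed.

(* Contraction as a projection: if f(C) spans exactly the kernel of P, then
   contracting C amounts to composing f with P. *)
Lemma rk_contract (T : finType) n p (f : T -> 'rV['F_2]_n) (P : 'M_(n, p))
    (C Z : {set T}) :
  (mat f C :=: kermx P)%MS ->
  rk f (Z :|: C) = (rk f C + rk (fun t => f t *m P) Z)%N.
Proof.
move=> defC; rewrite /rk mat_mulmx mat_setU -(mxrank_mul_ker _ P) addnC.
have CP0 : mat f C *m P = 0 by apply/sub_kermxP; rewrite defC.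
rewrite addsmxMr CP0 (addsmx_idPl (sub0mx _ _)) (capmx_idPr _) ?defC //.
by rewrite -defC addsmxSr.
Qed.

Lemma card_le_setU1D1 (T : finType) (A : {set T}) (a b : T) :
  a \notin A :\ b -> (#|A| <= #|a |: (A :\ b)|)%N.
Proof. by move=> aA; rewrite cardsU1 aA (cardsD1 b A) add1n; case: (b \in A). Qed.

Lemma mrank_relax2 (T : finType) (M : matroid T) (X Y Z : {set T}) :
  (#|X :&: Z| <= mrank M Z)%N -> (#|Y :&: Z| <= mrank M Z)%N ->
  mrank (relax2 M X Y) Z = mrank M Z.
Proof.
move=> XZ YZ; apply/eqP; rewrite eqn_leq; apply/andP; split.
  by apply/bigmax_leqP => B; rewrite /= !inE => /orP[/eqP ->|/orP[/eqP ->|BM]] //;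
     exact: (leq_bigmax_cond (F := fun B => #|B :&: Z|)).
apply/bigmax_leqP => B BM; apply: (leq_bigmax_cond (F := fun B => #|B :&: Z|)).
by rewrite /= !inE BM !orbT.
Qed.

Section Construction.
Variable k : nat.

(* Coordinates of the ambient space GF(2)^Coord: a special coordinate None
   (written oo below) and one coordinate for each a in XIdx, which consists of
   k coordinates j, one coordinate w for each w in GF(2)^k, and two more
   coordinates p = inr true and q = inr false. *)
Definition XIdx := (('I_k + 'rV['F_2]_k) + bool)%type.
Definition Coord := option XIdx.
Definition YIdx := (bool + ('rV['F_2]_k + 'I_k))%type.

(* Ground set: X = {x_a | a in XIdx} + {x*} and Y = {y_s | s in YIdx} + {y*}. *)
Definition Elt := (option XIdx + option YIdx)%type.

Definition x_ (a : XIdx) : Elt := inl (Some a).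
Definition xstar : Elt := inl None.
Definition y_ (s : YIdx) : Elt := inr (Some s).
Definition ystar : Elt := inr None.
Definition y0 : Elt := y_ (inl true).
Definition yq : Elt := y_ (inl false).
Definition yw (w : 'rV['F_2]_k) : Elt := y_ (inr (inl w)).
Definition yj (j : 'I_k) : Elt := y_ (inr (inr j)).
Definition jcoord (j : 'I_k) : Coord := Some (inl (inl j)).
Definition pcoord : XIdx := inr true.

(* The vectors y_s:  y0 = e_oo,  yq = e_oo + e_p + e_q,
   y_w = e_oo + sum_j w_j e_j + e_w + (1 + |w|) e_p,  y_j = e_oo + e_j + e_p.
   Each has coordinate oo equal to 1 and an even number of other nonzero
   coordinates. *)
Definition yentry (s : YIdx) (c : Coord) : 'F_2 :=
  if c is Some a then
    match s with
    | inl true => 0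
    | inl false => if a is inr _ then 1 else 0
    | inr (inl w) =>
        match a with
        | inl (inl j) => w 0 j
        | inl (inr w') => (w' == w)%:R
        | inr true => 1 + \sum_j w 0 j
        | inr false => 0
        end
    | inr (inr j) =>
        match a with
        | inl (inl j') => (j' == j)%:R
        | inr true => 1
        | _ => 0
        end
    end
  else 1.

(* x_a = e_a, x* = sum_a e_a, y* = sum_s y_s. *)
Definition entry (t : Elt) (c : Coord) : 'F_2 :=
  match t with
  | inl (Some a) => (c == Some a)%:R
  | inl None => if c is Some _ then 1 else 0
  | inr (Some s) => yentry s c
  | inr None => \sum_s yentry s c
  end.

Definition vec (g : Coord -> 'F_2) : 'rV['F_2]_#|{: Coord}| := \row_i g (enum_val i).
Definition rep (t : Elt) := vec (entry t).

Lemma vecE g c : vec g 0 (enum_rank c) = g c.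
Proof. by rewrite mxE enum_rankK. Qed.

Lemma repE t c : rep t 0 (enum_rank c) = entry t c.
Proof. exact: vecE. Qed.

Lemma vec_ext g h : g =1 h -> vec g = vec h.
Proof. by move=> gh; apply/rowP => i; rewrite !mxE gh. Qed.

Lemma vec_sum (I : finType) (P : pred I) (G : I -> Coord -> 'F_2) :
  \sum_(i | P i) vec (G i) = vec (fun c => \sum_(i | P i) G i c).
Proof. by apply/rowP => j; rewrite summxE !mxE; apply: eq_bigr => i _; rewrite mxE. Qed.

Lemma vec_add g h : vec g + vec h = vec (fun c => g c + h c).
Proof. by apply/rowP => i; rewrite !mxE. Qed.

Definition X : {set Elt} := [set t | if t is inl _ then true else false].
Definition Y : {set Elt} := ~: X.

Definition unit_elt (c : Coord) : Elt := if c is Some a then x_ a else y0.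
Definition units (P : {set Coord}) : {set Elt} := unit_elt @: P.

Lemma entry_unit c c' : entry (unit_elt c) c' = (c' == c)%:R.
Proof. by case: c => [a|] //=; case: c'. Qed.

Lemma unit_elt_inj : injective unit_elt.
Proof. by case=> [a|] [b|] //= [->]. Qed.

Lemma indep_by_coord_pivots (Z Z' : {set Elt}) :
  (forall z, z \in Z -> z \notin Z' -> exists2 c, entry z c = 1 &
     forall z', z' \in Z -> z' != z -> entry z' c = 0) ->
  rk rep Z' = #|Z'| -> rk rep Z = #|Z|.
Proof.
move=> pivot; apply: indep_by_pivots => z zZ zZ'.
have [c zc1 zc0] := pivot z zZ zZ'; exists (enum_rank c); first by rewrite (repE z c).
by move=> z' z'Z ne; rewrite (repE z' c) zc0.
Qed.

Lemma units_indep P : rk rep (units P) = #|units P|.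
Proof.
apply: (@indep_by_coord_pivots _ set0); last by rewrite rk0 cards0.
move=> _ /imsetP[c _ ->] _; exists c; first by rewrite entry_unit eqxx.
move=> _ /imsetP[c' _ ->] ne; rewrite entry_unit.
by case: eqP => // cc'; rewrite cc' eqxx in ne.
Qed.

Lemma rep_support t : rep t = \sum_(u in units [set c | entry t c == 1]) rep u.
Proof.
rewrite big_imset /=; last by move=> c c' _ _; exact: unit_elt_inj.
rewrite vec_sum; apply: vec_ext => c; rewrite (eq_bigr (fun c' => (c == c')%:R)).
  by rewrite sum_delta inE; case: (F2_cases (entry t c)) => ->.
by move=> c' _; rewrite entry_unit.
Qed.

Lemma in_X t : (t \in X) = (if t is inl _ then true else false).
Proof. by rewrite inE. Qed.

Lemma in_Y t : (t \in Y) = (if t is inr _ then true else false).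
Proof. by rewrite !inE; case: t. Qed.

Lemma XD1 : X :\ xstar = x_ @: setT.
Proof.
apply/setP => t; rewrite !inE; case: t => [[a|]|s] /=.
- by apply/esym/imsetP; exists a.
- by apply/esym/imsetP => -[a _].
- by apply/esym/imsetP => -[a _].
Qed.

Lemma YD1 : Y :\ ystar = y_ @: setT.
Proof.
apply/setP => t; rewrite !inE; case: t => [a|[s|]] /=.
- by apply/esym/imsetP => -[s _].
- by apply/esym/imsetP; exists s.
- by apply/esym/imsetP => -[s _].
Qed.

Lemma rep_xstar : rep xstar = \sum_(t in X :\ xstar) rep t.
Proof.
rewrite XD1 big_imset /=; last by move=> a b _ _ [].
rewrite vec_sum; apply: vec_ext => -[b|] /=; last by rewrite big1.
by rewrite sum_delta inE.
Qed.

Lemma rep_ystar : rep ystar = \sum_(t in Y :\ ystar) rep t.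
Proof.
rewrite YD1 big_imset /=; last by move=> a b _ _ [].
by rewrite vec_sum; apply: vec_ext => c /=; apply: eq_bigl => s; rewrite inE.
Qed.

Lemma XD1_indep : rk rep (X :\ xstar) = #|X :\ xstar|.
Proof.
have -> : X :\ xstar = units (Some @: setT) by rewrite XD1 /units -imset_comp.
exact: units_indep.
Qed.

(* Y \ {y*} is independent: yq and the y_w have private coordinates q and w,
   and the remaining y0, y_j have private coordinates oo and j. *)
Lemma YD1_indep : rk rep (Y :\ ystar) = #|Y :\ ystar|.
Proof.
rewrite YD1; apply: (@indep_by_coord_pivots _ (y0 |: (yj @: setT))).
  move=> _ /imsetP[s _ ->]; case: s => [[|]|[w|j]] notZ'.
  - by rewrite setU11 in notZ'.
  - by exists (Some (inr false)) => // _ /imsetP[[[|]|[w'|j']] _ ->].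
  - exists (Some (inl (inr w))); rewrite /= ?eqxx //.
    move=> _ /imsetP[[[|]|[w'|j']] _ ->] //= ne.
    by case: eqP => // ww'; rewrite ww' eqxx in ne.
  - by case/negP: notZ'; apply/setU1r/imsetP; exists j.
apply: (@indep_by_coord_pivots _ (units setT)); last exact: units_indep.
move=> _ /setU1P[->|/imsetP[j _ ->]]; first by case/negP; apply/imsetP; exists None.
move=> _; exists (jcoord j); rewrite /= ?eqxx //.
move=> _ /setU1P[->|/imsetP[j' _ ->]] //= ne.
by case: eqP => // jj'; rewrite jj' eqxx in ne.
Qed.

Lemma X_circuit : mcircuit (vector_matroid rep setT) X.
Proof. by apply: (mcircuit_vm (z0 := xstar)); rewrite ?subsetT ?inE ?rep_xstar ?XD1_indep. Qed.

Lemma Y_circuit : mcircuit (vector_matroid rep setT) Y.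
Proof. by apply: (mcircuit_vm (z0 := ystar)); rewrite ?subsetT ?inE ?rep_ystar ?YD1_indep. Qed.

Lemma card_XIdx : #|{: XIdx}| = (k + 2 ^ k + 2)%N.
Proof. by rewrite !card_sum card_ord card_mx card_Fp // card_bool mul1n. Qed.

Lemma card_YIdx : #|{: YIdx}| = #|{: XIdx}|.
Proof.
rewrite card_XIdx !card_sum card_ord card_mx card_Fp // card_bool mul1n.
by rewrite addnC [(_ + k)%N]addnC.
Qed.

Lemma yentry_even s : \sum_(a : XIdx) yentry s (Some a) = 0.
Proof.
rewrite !big_sumType /= big_bool /=.
case: s => [[|]|[w|j]] /=.
- by rewrite !big1 //; apply/val_inj.
- by rewrite !big1 //; apply/val_inj.
- rewrite (eq_bigr (fun w' => ((w == w')%:R : 'F_2))) => [|w' _]; last by rewrite eq_sym.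
  by rewrite sum_delta; case: (F2_cases (\sum_(j < k) w 0 j)) => ->; apply/val_inj.
- rewrite (eq_bigr (fun j' => ((j == j')%:R : 'F_2))) => [|j' _]; last by rewrite eq_sym.
  by rewrite sum_delta big1 //; apply/val_inj.
Qed.

(* The linear forms v |-> v_oo and v |-> sum_a v_a, which cut out the spans
   of X and of Y respectively. *)
Definition formX (v : 'rV['F_2]_#|{: Coord}|) : 'F_2 := v 0 (enum_rank (None : Coord)).
Definition formY (v : 'rV['F_2]_#|{: Coord}|) : 'F_2 :=
  \sum_(a : XIdx) v 0 (enum_rank (Some a : Coord)).

Lemma formX_morph : {morph formX : u v / u + v}.
Proof. by move=> u v; rewrite /formX mxE. Qed.

Lemma formY_morph : {morph formY : u v / u + v}.
Proof. by move=> u v; rewrite /formY -big_split; apply: eq_bigr => a _; rewrite mxE. Qed.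

Hypothesis k_odd : odd k.

Lemma odd_XIdx : odd #|{: XIdx}|.
Proof. by rewrite card_XIdx !oddD oddX k_odd; case: k k_odd. Qed.

Lemma formX_rep t : (formX (rep t) == 0) = (t \in X).
Proof.
rewrite /formX (repE t None) in_X; case: t => [[a|]|[s|]] //=.
by rewrite F2_sum_const1 card_YIdx odd_XIdx.
Qed.

Lemma formY_rep t : (formY (rep t) == 0) = (t \in Y).
Proof.
rewrite /formY (eq_bigr (fun a => entry t (Some a))) => [|a _]; last exact: repE.
rewrite in_Y; case: t => [[b|]|[s|]] /=.
- by rewrite (eq_bigr (fun a => ((b == a)%:R : 'F_2))) ?sum_delta // => a _; rewrite eq_sym.
- by rewrite F2_sum_const1 odd_XIdx.
- by rewrite yentry_even.
- by rewrite exchange_big big1 // => s _; rewrite yentry_even.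
Qed.

Lemma rk_X : rk rep X = #|{: XIdx}|.
Proof.
rewrite (rk_setD1_sum (z := xstar)) ?inE ?rep_xstar // XD1_indep XD1.
by rewrite card_imset ?cardsT // => a b [].
Qed.

Lemma rk_Y : rk rep Y = #|{: XIdx}|.
Proof.
rewrite (rk_setD1_sum (z := ystar)) ?inE ?rep_ystar // YD1_indep YD1.
by rewrite card_imset ?cardsT ?card_YIdx // => s s' [].
Qed.

Lemma rk_setT : rk rep setT = #|{: Coord}|.
Proof.
apply/eqP; rewrite eqn_leq rank_leq_col /=.
have := rkS rep (subsetT (units setT)).
by rewrite units_indep card_imset ?cardsT //; exact: unit_elt_inj.
Qed.

Definition M := vector_matroid rep setT.

Lemma X_circuit_hyperplane : circuit_hyperplane M X.
Proof.
apply/andP; split; first exact: X_circuit.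
apply: (mhyperplane_vm formX_morph (subsetT X)) => [t _|]; first exact: formX_rep.
by rewrite rk_X rk_setT card_option.
Qed.

Lemma Y_circuit_hyperplane : circuit_hyperplane M Y.
Proof.
apply/andP; split; first exact: Y_circuit.
apply: (mhyperplane_vm formY_morph (subsetT Y)) => [t _|]; first exact: formY_rep.
by rewrite rk_Y rk_setT card_option.
Qed.

(* Every y in Y other than y0 lies on two circuits meeting X:
   y together with the unit vectors of its support, and y together with x*
   and the unit vectors of the coordinates where y and x* differ. *)
Definition support_circuit (y : Elt) : {set Elt} :=
  y |: units [set c | entry y c == 1].
Definition cosupport_circuit (y : Elt) : {set Elt} :=
  y |: (xstar |: units [set c | entry y c != entry xstar c]).

Lemma entry_Y_oo y : y \in Y -> entry y None = 1.
Proof.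
move=> yY; have := formX_rep y; rewrite /formX (repE y None) -[y \in X]negbK -in_setC yY.
by case: (F2_cases (entry y None)) => ->.
Qed.

Lemma Y_notin_units y (P : {set Coord}) : y \in Y -> y != y0 -> y \notin units P.
Proof. by move=> yY ne; apply/imsetP => -[[a|] _ eq]; rewrite eq ?eqxx ?in_Y in yY ne. Qed.

Lemma xstar_notin_units (P : {set Coord}) : xstar \notin units P.
Proof. by apply/imsetP => -[[a|] _]. Qed.

Lemma Y_has_pivot y : y \in Y -> y != y0 -> exists a, entry y (Some a) = 1.
Proof.
rewrite in_Y; case: y => [//|[[[|]|[w|j]]|]] _ ne //.
- by exists (inr false).
- by exists (inl (inr w)); rewrite /= eqxx.
- by exists (inl (inl j)); rewrite /= eqxx.
exists (inr false) => /=.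
by rewrite (bigD1 (inl false)) //= big1 ?addr0 // => -[[|]|[w|j]].
Qed.

Lemma support_circuitP y : y \in Y -> y != y0 -> mcircuit M (support_circuit y).
Proof.
move=> yY ne; apply: (mcircuit_vm (z0 := y)); rewrite ?subsetT ?setU11 //;
  rewrite /support_circuit setU1K ?Y_notin_units //.
  exact: rep_support.
exact: units_indep.
Qed.

Lemma cosupport_circuitP y : y \in Y -> y != y0 -> mcircuit M (cosupport_circuit y).
Proof.
move=> yY ne; set D := [set c | entry y c != entry xstar c].
have yD : y \notin xstar |: units D.
  by rewrite in_setU1 negb_or Y_notin_units // andbT; apply/eqP => yx; rewrite yx in_Y in yY.
apply: (mcircuit_vm (z0 := y)); rewrite ?subsetT ?setU11 //;
  rewrite /cosupport_circuit setU1K //.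
  rewrite big_setU1 ?xstar_notin_units //= big_imset /=; last first.
    by move=> c c' _ _; exact: unit_elt_inj.
  rewrite vec_sum vec_add; apply: vec_ext => c.
  rewrite (eq_bigr (fun c' => (c == c')%:R)) => [|c' _]; last by rewrite entry_unit.
  by rewrite sum_delta inE; exact: F2_add_neq.
have [b yb] := Y_has_pivot yY ne.
apply: (@indep_by_coord_pivots _ (units D)); last exact: units_indep.
move=> z zZ zD; have -> : z = xstar by case/setU1P: zZ => // zU; rewrite zU in zD.
exists (Some b) => // _ /setU1P[->|/imsetP[c cD ->]] //= _.
by rewrite entry_unit; case: eqP => // bc; move: cD; rewrite -bc inE yb eqxx.
Qed.

Lemma X_Y_common_circuit x y : x \in X -> y \in Y ->
  exists C, [/\ mcircuit M C, x \in C & y \in C].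
Proof.
move=> xX yY; pose y1 := if y == y0 then yq else y.
have y1Y : y1 \in Y by rewrite /y1; case: eqP => _ //; rewrite in_Y.
have y1ne : y1 != y0 by rewrite /y1; case: ifP => [_|/negbT //]; apply/eqP; case.
have y_in (C : {set Elt}) : y1 \in C -> y0 \in C -> y \in C by rewrite /y1; case: eqP => [->|].
have y0_unit (P : {set Coord}) : None \in P -> y0 \in units P.
  by move=> NP; apply/imsetP; exists None.
have y0_supp : y0 \in support_circuit y1.
  by rewrite setU1r // y0_unit // inE entry_Y_oo.
have y0_cosupp : y0 \in cosupport_circuit y1.
  by rewrite !setU1r // y0_unit // inE entry_Y_oo.
case: x xX => [[a|]|s] xX; last by rewrite in_X in xX.
  have xa_unit (P : {set Coord}) : Some a \in P -> x_ a \in units P.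
    by move=> aP; apply/imsetP; exists (Some a).
  have [ya|ya] := boolP (entry y1 (Some a) == 1).
    exists (support_circuit y1); split; rewrite ?support_circuitP ?y_in ?setU11 //.
    by rewrite setU1r // xa_unit // inE.
  exists (cosupport_circuit y1); split; rewrite ?cosupport_circuitP ?y_in ?setU11 //.
  by rewrite !setU1r // xa_unit // inE /= (F2_neq1 ya).
exists (cosupport_circuit y1); split; rewrite ?cosupport_circuitP ?y_in ?setU11 //.
by rewrite setU1r ?setU11.
Qed.

Lemma M_connected : mconnected M.
Proof.
move=> x y _ _ _; have notX t : (t \notin X) = (t \in Y) by rewrite /Y in_setC.
have [xX|] := boolP (x \in X); have [yX|] := boolP (y \in X).
- by exists X; split; first exact: X_circuit.
- rewrite notX => yY; have [C [? ? ?]] := X_Y_common_circuit xX yY.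
  by exists C.
- rewrite notX => xY; have [C [? ? ?]] := X_Y_common_circuit yX xY.
  by exists C.
- by rewrite !notX => yY xY; exists Y; split; first exact: Y_circuit.
Qed.

Definition N := relax2 M X Y.

(* On sets containing y0 and x_p, relaxing X and Y does not change the rank:
   X meets such a set Z in at most |(X :&: Z) :\ x* + y0| <= r(Z) elements,
   and Y in at most |(Y :&: Z) :\ y* + x_p| <= r(Z) elements, x_p being
   outside the span of Y. *)
Lemma mrank_N (Z : {set Elt}) : y0 \in Z -> x_ pcoord \in Z -> mrank N Z = rk rep Z.
Proof.
move=> y0Z xpZ; have rkZ : mrank M Z = rk rep Z by apply: mrank_vm; exact: subsetT.
have XZ : (#|X :&: Z| <= rk rep Z)%N.
  apply: leq_trans (@card_le_setU1D1 _ _ y0 xstar _) (indep_le_rk _ _); first by rewrite !inE.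
    by rewrite subUset sub1set y0Z subDset subsetU // subsetIr orbT.
  apply: (indepS _ (units_indep setT)); apply/subsetP => t; rewrite !inE.
  case/orP => [/eqP ->|]; first by apply/imsetP; exists None.
  by case: t => [[a|]|] //= _; apply/imsetP; exists (Some a).
have YZ : (#|Y :&: Z| <= rk rep Z)%N.
  set J := (Y :&: Z) :\ ystar; have xpJ : x_ pcoord \notin J by rewrite !inE.
  apply: leq_trans (@card_le_setU1D1 _ _ (x_ pcoord) ystar xpJ) (indep_le_rk _ _).
    by rewrite subUset sub1set xpZ subDset subsetU // subsetIr orbT.
  have iJ : rk rep J = #|J| by apply: (indepS _ YD1_indep); apply/setSD/subsetIl.
  have xp_out : ~~ (rep (x_ pcoord) <= mat rep J)%MS.
    apply/negP => span_xp; have := formY_rep (x_ pcoord); rewrite in_Y => /negbT/negP; apply.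
    apply/eqP/(span_form formY_morph _ span_xp) => t; rewrite in_setD1 in_setI.
    by case/and3P => _ tY _; apply/eqP; rewrite formY_rep.
  by rewrite rkU1 cardsU1 xpJ iJ xp_out addnC.
by rewrite mrank_relax2 ?rkZ.
Qed.

(* The minor: contract the unit vectors C of all coordinates outside J (this
   includes y0 and x_p), and delete everything except S = {y_w | w <> 0}.
   Contraction of C is the projection onto the J coordinates, which maps y_w
   to w. *)
Definition Jcoords : {set Coord} := jcoord @: setT.
Definition Cset : {set Elt} := units (~: Jcoords).
Definition Sset : {set Elt} := yw @: [set w | w != 0].
Definition Dset : {set Elt} := ~: (Cset :|: Sset).

Definition projJ : 'M['F_2]_(#|{: Coord}|, k) := \matrix_(i, j) (enum_val i == jcoord j)%:R.
Definition proj (t : Elt) : 'rV['F_2]_k := rep t *m projJ.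

Lemma projE t j : proj t 0 j = entry t (jcoord j).
Proof.
rewrite mxE (bigD1 (enum_rank (jcoord j))) //= /projJ !mxE enum_rankK eqxx mulr1.
rewrite big1 ?addr0 // => i ne; rewrite !mxE; case: eqP => [eq|]; last by rewrite mulr0.
by rewrite -eq enum_valK eqxx in ne.
Qed.

Lemma proj_yw w : proj (yw w) = w.
Proof. by apply/rowP => j; rewrite projE. Qed.

Lemma jcoord_inj : injective jcoord.
Proof. by move=> j j' []. Qed.

Lemma rank_projJ : \rank projJ = k.
Proof.
apply/eqP; rewrite eqn_leq rank_leq_col /=.
have sub1 : ((1%:M : 'M['F_2]_k) <= projJ)%MS.
  have -> : (1%:M : 'M['F_2]_k) = rowsub (enum_rank \o jcoord) projJ.
    apply/matrixP => j j'; rewrite !mxE /= enum_rankK.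
    by case: (j =P j') => [->|ne]; rewrite ?eqxx // (inj_eq jcoord_inj) (introF eqP ne).
  exact: rowsub_sub.
by rewrite -{1}(mxrank1 'F_2 k) mxrankS.
Qed.

Lemma mat_Cset : (mat rep Cset :=: kermx projJ)%MS.
Proof.
have sub : (mat rep Cset <= kermx projJ)%MS.
  apply/mat_subP => _ /imsetP[c cJ ->]; rewrite sub_kermx; apply/eqP/rowP => j.
  have := projE (unit_elt c) j; rewrite /proj => ->; rewrite entry_unit mxE.
  by case: eqP => // jc; move: cJ; rewrite -jc inE imset_f.
apply/eqmxP; rewrite sub -(mxrank_leqif_sup sub).2 mxrank_ker rank_projJ.
rewrite -/(rk rep Cset) units_indep card_imset; last exact: unit_elt_inj.
rewrite cardsCs setCK card_imset ?cardsT ?card_ord; last exact: jcoord_inj.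
by rewrite andTb; apply/eqP; congr (_ - _)%N; apply: eq_card.
Qed.

Lemma rk_contracted (Z : {set Elt}) :
  rk rep (Z :|: Cset) = (#|Cset| + rk id (proj @: Z))%N.
Proof. by rewrite (rk_contract Z mat_Cset) units_indep (@rk_relabel _ _ _ _ id proj). Qed.

Lemma proj_inj : {in Sset &, injective proj}.
Proof. by move=> _ _ /imsetP[w _ ->] /imsetP[w' _ ->]; rewrite !proj_yw => ->. Qed.

Lemma proj_Sset : proj @: Sset = [set v : 'rV['F_2]_k | v != 0].
Proof.
apply/setP => v; apply/imsetP/idP => [[_ /imsetP[w w0 ->] ->]|v0].
  by rewrite proj_yw.
by exists (yw v); [exact: imset_f | rewrite proj_yw].
Qed.

Lemma Cset_relaxation_safe (W : {set Elt}) : Cset \subset W -> mrank N W = rk rep W.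
Proof.
move=> sCW; apply: mrank_N; apply: (subsetP sCW); apply/imsetP.
  by exists None; rewrite // !inE; apply/imsetP => -[].
by exists (Some pcoord); rewrite // !inE; apply/imsetP => -[].
Qed.

Lemma Sset_notin_Cset t : t \in Sset -> t \notin Cset.
Proof. by case/imsetP => w _ ->; apply/imsetP => -[[a|] _ eq]. Qed.

Lemma minor_ground : setT :\: (Cset :|: Dset) = Sset.
Proof.
apply/setP => t; rewrite setTD /Dset !inE.
have [tS|tS] := boolP (t \in Sset); first by rewrite (negbTE (Sset_notin_Cset tS)).
by case: (t \in Cset).
Qed.

(* N / C \ D is isomorphic to PG(k-1,2) via proj: B is a basis of the minor
   iff proj(B) is independent of size |B| and of full rank. *)
Lemma N_has_PG_minor : has_minor_iso N (PG2 k).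
Proof.
exists Cset, Dset; split; rewrite ?subsetT //.
  by rewrite disjoints_subset setCK subsetUl.
exists proj; rewrite /= minor_ground; split; [exact: proj_inj | exact: proj_Sset |].
move=> B BS; rewrite !inE BS vbasisE -proj_Sset imsetS //=.
have -> : setT :\: Dset = Sset :|: Cset by rewrite setDE setCK setTI setUC.
rewrite !Cset_relaxation_safe ?subsetUr ?subxx // !rk_contracted units_indep.
rewrite (card_in_imset (sub_in2 (subsetP BS) proj_inj)) [(#|B| + _)%N]addnC !eqn_add2l.
have rle : (rk id (proj @: B) <= rk id (proj @: Sset))%N by apply/rkS/imsetS.
by case: eqP => [<-|] //=; rewrite eqn_leq rle.
Qed.

Lemma N_in_D : in_D N.
Proof.
exists M, X, Y; split; split.
- exact: vector_matroidP.
- by exists #|{: Coord}|, rep => B; rewrite /M /= inE.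
- exact: M_connected.
- exact: X_circuit_hyperplane.
- exact: Y_circuit_hyperplane.
- by rewrite disjoints_subset setCK.
- by rewrite setUCr.
- by [].
Qed.

End Construction.

Theorem mainTheorem16 (k : nat) :
  odd k ->
  exists (T : finType) (N : matroid T), in_D N /\ has_minor_iso N (PG2 k).
Proof.
by move=> k_odd; exists (Elt k), (N k); split; [exact: N_in_D | exact: N_has_PG_minor].
Qed.
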